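(* Let $S=\mathbb{C}[x_1,x_2,x_3,x_4]$. Then the ideal $I=\langle h_1,h_4\rangle$ is a prime ideal of $S$.
   Context: $h_a=\sum_{1\le i_1\le\cdots\le i_a\le 4}x_{i_1}\cdots x_{i_a}$ denotes the complete symmetric polynomial of degree $a$ in $x_1,\dots,x_4$. *)

(* C[x1,x2,x3,x4] is modelled as the iterated univariate
   polynomial ring R[x1][x2][x3][x4] = {poly {poly {poly {poly R}}}}. *)
From HB Require Import structures.
From mathcomp Require Import all_boot all_order all_algebra.
Set Implicit Arguments. Unset Strict Implicit. Unset Printing Implicit Defensive.
Import Order.TTheory GRing.Theory Num.Theory.
Local Open Scope ring_scope.

Definition poly4 (R : nzRingType) : Type := {poly {poly {poly {poly R}}}}.

(* The variables x_1, ..., x_4 (indexed by i : 'I_4, i = 0 is x_1). *)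
Definition var4 (R : nzRingType) (i : 'I_4) : {poly {poly {poly {poly R}}}} :=
  match val i with
  | 0 => ('X)%:P%:P%:P
  | 1 => ('X)%:P%:P
  | 2 => ('X)%:P
  | _ => 'X
  end.

(* Complete homogeneous symmetric polynomial of degree a in x_1..x_4:
   the sum of all monomials x^e with e : 'I_4 -> nat, |e| = a
   (each exponent is at most a, so e ranges over {ffun 'I_4 -> 'I_a.+1}). *)
Definition h4sym (R : comNzRingType) (a : nat) : {poly {poly {poly {poly R}}}} :=
  \sum_(e : {ffun 'I_4 -> 'I_a.+1} | (\sum_(i < 4) (e i : nat))%N == a)
     \prod_(i < 4) var4 R i ^+ e i.

Definition in_ideal2 (A : comNzRingType) (f g p : A) : Prop :=
  exists a b : A, p = a * f + b * g.

Definition prime_ideal (A : comNzRingType) (I : A -> Prop) : Prop :=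
  ~ I 1 /\ forall p q : A, I (p * q) -> I p \/ I q.

From HB Require Import structures.
From mathcomp Require Import all_boot all_order all_algebra.
From mathcomp Require Import ring zify.
Set Implicit Arguments. Unset Strict Implicit. Unset Printing Implicit Defensive.
Import Order.TTheory GRing.Theory Num.Theory.
Local Open Scope ring_scope.

(* Write S = B[x4] with B = C[x1][x2][x3].  Since h1 = x4 - s with
   s = -(x1 + x2 + x3), a polynomial p lies in <h1, h4> iff g := h4(s)
   divides p(s) in B (in_ideal2_XsubC), so it suffices that g is a prime
   element of B.  With e1 = 0 the generating function of complete symmetric
   polynomials gives g = e2^2 - e4, a monic quartic in x3 whose coefficients
   are polynomials in u = x1 + x2 and p = x1 x2 (h4_on_h1_quartic).

   Primality of g is reduced to its specialisations x1 := c, c != 0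
   (prime_of_specialisations): each such h_c is a monic quartic in x3 over
   C[x2] with no factor of degree 1 or 2 (an explicit coefficient analysis),
   hence prime by Gauss's lemma over C[x2]
   (prime_of_only_constant_factors). *)

Definition divides (R : comNzRingType) (h p : R) : Prop := exists m : R, p = m * h.

Definition prime_element (R : comNzRingType) (h : R) : Prop :=
  forall a b : R, divides h (a * b) -> divides h a \/ divides h b.

(* Every factorisation of the polynomial h has a constant factor; for a
   nonconstant polynomial over a field this is irreducibility. *)
Definition only_constant_factors (R : nzRingType) (h : {poly R}) : Prop :=
  forall U W : {poly R}, h = U * W -> size U = 1%N \/ size W = 1%N.

Lemma poly_coef_divpK (F : fieldType) (d : {poly F}) (V : {poly {poly F}}) :
  (forall i, d %| V`_i) -> V = d%:P * map_poly (fun q => q %/ d) V.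
Proof.
by move=> dV; apply/polyP => i; rewrite coefCM coef_map_id0 ?div0p //= divpKC.
Qed.

Section FractionField.
Variable R : idomainType.
Local Open Scope quotient_scope.

Lemma tofrac_surj (x : {fraction R}) :
  exists n d : R, d != 0 /\ x = tofrac n / tofrac d.
Proof.
exists (\n_(repr x)), (\d_(repr x)); split; first exact: denom_ratioP.
have d0 := denom_ratioP (repr x).
rewrite -[x in LHS]reprK; unlock tofrac.
rewrite /GRing.inv /= -FracField.pi_inv /GRing.mul /= -FracField.pi_mul.
apply/eqmodP; rewrite /= FracField.equivfE /FracField.mulf /FracField.invf.
by rewrite !numden_Ratio ?oner_neq0 //= ?mulr1 ?mul1r // mulrC.
Qed.

Lemma tofrac_inj : injective (@tofrac R).
Proof. by move=> x y /eqP; rewrite tofrac_eq => /eqP. Qed.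

Lemma poly_clear_denominators (P : {poly {fraction R}}) :
  exists2 d : R, d != 0 &
    exists P0 : {poly R}, (tofrac d)%:P * P = map_poly (@tofrac R) P0.
Proof.
elim/poly_ind: P => [|Q c [d d0 [Q0 EQ]]].
  by exists 1; [exact: oner_neq0 | exists 0; rewrite mulr0 rmorph0].
have [n [m [m0 ->]]] := tofrac_surj c.
exists (d * m); first by rewrite mulf_neq0.
exists (m%:P * Q0 * 'X + (d * n)%:P).
rewrite rmorphD rmorphM rmorphM /= map_polyX !map_polyC /= -EQ mulrDr; congr (_ + _).
  by rewrite rmorphM polyCM /= -!mulrA mulrCA.
have m0' : tofrac m != 0 by rewrite tofrac_eq0.
rewrite -!polyCM; congr (_%:P); rewrite !rmorphM /=.
by rewrite [tofrac n / _]mulrC mulrA -(mulrA _ (tofrac m)) divff // mulr1.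
Qed.

Lemma size_clear_denominators (d : R) (P : {poly {fraction R}}) (P0 : {poly R}) :
  d != 0 -> (tofrac d)%:P * P = map_poly (@tofrac R) P0 -> size P = size P0.
Proof.
move=> d0 E; have := congr1 (fun p : {poly _} => size p) E.
rewrite /= size_Cmul ?tofrac_eq0 // => ->.
exact: size_map_inj_poly tofrac_inj (rmorph0 _) P0.
Qed.
End FractionField.

Section GaussLemma.
Variable C : closedFieldType.

(* A linear polynomial t - a dividing all coefficients of U * W divides all
   coefficients of U or all those of W: evaluate the coefficients at t = a. *)
Lemma XsubC_dvd_coefs (a : C) (U W : {poly {poly C}}) :
  (forall i, ('X - a%:P) %| (U * W)`_i) ->
  (forall i, ('X - a%:P) %| U`_i) \/ (forall i, ('X - a%:P) %| W`_i).
Proof.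
move=> hUW; pose ev := map_poly (horner_eval a).
have vanish (V : {poly {poly C}}) : (forall i, ('X - a%:P) %| V`_i) <-> ev V = 0.
  split=> [dV | /polyP eV i].
    by apply/polyP => i; rewrite coef_map coef0 /= horner_evalE; apply/rootP;
      rewrite -dvdp_XsubCl.
  by rewrite dvdp_XsubCl; apply/rootP; have := eV i; rewrite coef_map coef0.
have /eqP : ev U * ev W = 0 by rewrite -rmorphM; apply/vanish.
by rewrite mulf_eq0 => /orP [/eqP/vanish | /eqP/vanish]; [left | right].
Qed.

(* By induction on the number of linear factors
   of d, using XsubC_dvd_coefs for each of them. *)
Lemma gauss_content_split (d : {poly C}) (U W : {poly {poly C}}) :
  d != 0 -> (forall i, d %| (U * W)`_i) ->
  exists d1 d2, [/\ d = d1 * d2, forall i, d1 %| U`_i & forall i, d2 %| W`_i].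
Proof.
have [n] : exists n, (size d <= n)%N by exists (size d).
elim: n d U W => [|n IH] d U W.
  by rewrite leqn0 size_poly_eq0 => /eqP ->; rewrite eqxx.
move=> sd d0 hd.
have [/eqP s1 | s1] := eqVneq (size d) 1%N.
  have unit_dvd p : d %| p by apply: dvdUp; rewrite -size_poly_eq1.
  by exists d, 1; split=> [|i|i]; rewrite ?mulr1 // dvd1p.
have [a /factor_theorem [d' Dd]] := closed_rootP _ s1.
have Xa0 : ('X - a%:P : {poly C}) != 0 by rewrite polyXsubC_eq0.
have d'0 : d' != 0 by apply: contraNneq d0 => e; rewrite Dd e mul0r.
have sd' : (size d' <= n)%N by move: sd; rewrite Dd size_mul // size_XsubC addn2.
have hXa i : ('X - a%:P) %| (U * W)`_i by apply: dvdp_trans (hd i); rewrite Dd dvdp_mull.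
wlog dU : U W hd hXa / forall i, ('X - a%:P) %| U`_i.
  move=> wlog_dU; have [dU | dW] := XsubC_dvd_coefs hXa; first exact: wlog_dU.
  rewrite mulrC in hd hXa.
  have [d2 [d1 [Ed H2 H1]]] := wlog_dU W U hd hXa dW.
  by exists d1, d2; rewrite mulrC.
set U' := map_poly (fun q => q %/ ('X - a%:P)) U.
have EU : U = ('X - a%:P)%:P * U' := poly_coef_divpK dU.
have hd' i : d' %| (U' * W)`_i.
  by have := hd i; rewrite EU -mulrA coefCM Dd [_ * ('X - _)]mulrC dvdp_mul2l.
have [d1 [d2 [E1 H1 H2]]] := IH d' U' W sd' d'0 hd'.
exists (d1 * ('X - a%:P)), d2; split=> // [|i]; first by rewrite Dd E1 mulrAC.
by rewrite EU coefCM [X in _ %| X]mulrC dvdp_mul2r.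
Qed.
End GaussLemma.

Section GaussPrimality.
Variable C : closedFieldType.
Local Notation A := {poly C}.
Local Notation F := {fraction A}.
Local Notation tf := (@tofrac A).

(* Clear the denominators of a
   factorisation over C(t) and redistribute them with gauss_content_split. *)
Lemma only_constant_factors_frac (h : {poly A}) :
  only_constant_factors h -> only_constant_factors (map_poly tf h).
Proof.
move=> irr D E EH.
have tfi : injective tf := @tofrac_inj A.
have [dD dD0 [D0 ED]] := poly_clear_denominators D.
have [dE dE0 [E0 EE]] := poly_clear_denominators E.
have dd0 : dD * dE != 0 by rewrite mulf_neq0.
have EDE : D0 * E0 = (dD * dE)%:P * h.
  apply: (map_inj_poly tfi (rmorph0 _)); rewrite [LHS]rmorphM [RHS]rmorphM /=.
  by rewrite -ED -EE map_polyC /= rmorphM polyCM EH mulrACA.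
have [|d1 [d2 [Ed H1 H2]]] := gauss_content_split dd0 (U := D0) (W := E0).
  by move=> i; rewrite EDE coefCM dvdp_mulIl.
have EU := poly_coef_divpK H1; have EW := poly_coef_divpK H2.
set U := map_poly _ D0 in EU; set W := map_poly _ E0 in EW.
have hUW : h = U * W.
  apply: (@mulfI _ (d1 * d2)%:P); first by rewrite polyC_eq0 -Ed.
  by rewrite -Ed -EDE {1}EU {1}EW Ed polyCM mulrACA.
have d10 : d1 != 0 by apply: contraNneq dd0 => e; rewrite Ed e mul0r.
have d20 : d2 != 0 by apply: contraNneq dd0 => e; rewrite Ed e mulr0.
rewrite (size_clear_denominators dD0 ED) (size_clear_denominators dE0 EE).
by rewrite EU EW !size_Cmul //; apply: irr.
Qed.

(* For a monic h, divisibility by h can be tested over the fraction field: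
   the remainder of x modulo h has smaller size than h. *)
Lemma monic_dvdp_frac (h x : {poly A}) :
  h \is monic -> map_poly tf h %| map_poly tf x -> divides h x.
Proof.
move=> mh Hx.
have tfi : injective tf := @tofrac_inj A.
have Ex := Pdiv.RingMonic.rdivp_eq mh x.
set q := Pdiv.CommonRing.rdivp x h in Ex; set r := Pdiv.CommonRing.rmodp x h in Ex.
have sr : (size r < size h)%N by apply: Pdiv.CommonRing.ltn_rmodpN0; exact: monic_neq0.
have Hr : map_poly tf h %| map_poly tf r.
  have -> : r = x - q * h by rewrite {1}Ex addrC addKr.
  by rewrite rmorphB rmorphM dvdp_sub // dvdp_mull.
suff r0 : r = 0 by exists q; rewrite {1}Ex r0 addr0.
apply: (map_inj_poly tfi (rmorph0 tf)); rewrite rmorph0.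
apply: contraTeq sr => nr; rewrite -leqNgt.
by have := dvdp_leq nr Hr; rewrite !size_map_inj_poly.
Qed.

(* A monic polynomial over C[t] with only constant factors is a prime
   element: over the field C(t) it is irreducible, so it is coprime to any
   polynomial it does not divide, and we conclude by monic_dvdp_frac. *)
Lemma prime_of_only_constant_factors (h : {poly A}) :
  h \is monic -> only_constant_factors h -> prime_element h.
Proof.
move=> mh irr a b [m Eab].
pose H := map_poly tf h.
have irrH := only_constant_factors_frac irr.
have HAB : H %| map_poly tf a * map_poly tf b.
  by rewrite -rmorphM /= Eab rmorphM dvdp_mull.
pose G := gcdp H (map_poly tf a).
have GH : G %| H by apply: dvdp_gcdl.
have [/eqP sq | sG] := irrH (H %/ G) G (esym (divpK GH)).
- left; apply: monic_dvdp_frac mh _.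
  have [c c0 Eq] := size_poly1P _ sq.
  have eGH : G %= H.
    by rewrite -dvdp_size_eqp //; apply/eqP; rewrite -(divpK GH) Eq size_Cmul.
  by rewrite -(eqp_dvdl _ eGH) dvdp_gcdr.
- right; apply: monic_dvdp_frac mh _.
  have cop : coprimep H (map_poly tf a) by rewrite coprimep_def sG.
  by rewrite -(Gauss_dvdpl _ cop) mulrC.
Qed.
End GaussPrimality.

Section Quartics.
Variable R : nzRingType.

Definition quart (c0 c1 c2 c3 c4 : R) : {poly R} :=
  c0%:P + c1%:P * 'X + c2%:P * 'X^2 + c3%:P * 'X^3 + c4%:P * 'X^4.

Lemma coef_quart c0 c1 c2 c3 c4 i :
  (quart c0 c1 c2 c3 c4)`_i = nth 0 [:: c0; c1; c2; c3; c4] i.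
Proof.
rewrite /quart !coefD !coefCM coefC coefX !coefXn.
by case: i => [|[|[|[|[|i]]]]]; rewrite /= ?mulr0 ?mulr1 ?addr0 ?add0r ?nth_nil.
Qed.

Lemma quart_inj a0 a1 a2 a3 a4 b0 b1 b2 b3 b4 :
  quart a0 a1 a2 a3 a4 = quart b0 b1 b2 b3 b4 ->
  [/\ a0 = b0, a1 = b1, a2 = b2, a3 = b3 & a4 = b4].
Proof.
move=> E; have C i := congr1 (fun p : {poly R} => p`_i) E.
by move: (C 0%N) (C 1%N) (C 2%N) (C 3%N) (C 4%N); rewrite /= !coef_quart.
Qed.

Lemma quartE (p : {poly R}) : (size p <= 5)%N ->
  p = quart p`_0 p`_1 p`_2 p`_3 p`_4.
Proof.
move=> /leq_sizeP sp; apply/polyP => i; rewrite coef_quart.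
by case: i => [|[|[|[|[|i]]]]] //=; rewrite nth_nil sp.
Qed.

Lemma size_quart c0 c1 c2 c3 c4 : c4 != 0 -> size (quart c0 c1 c2 c3 c4) = 5%N.
Proof.
move=> c40; apply/anti_leq/andP; split.
  by apply/leq_sizeP => j hj; rewrite coef_quart nth_default.
rewrite ltnNge; apply/negP => /leq_sizeP /(_ 4%N (leqnn _)).
by rewrite coef_quart /=; apply/eqP.
Qed.

Lemma lead_quart c0 c1 c2 c3 c4 : c4 != 0 -> lead_coef (quart c0 c1 c2 c3 c4) = c4.
Proof. by move=> c40; rewrite lead_coefE size_quart // coef_quart. Qed.
End Quartics.

Lemma map_quart (R S : nzRingType) (f : {rmorphism R -> S}) c0 c1 c2 c3 c4 :
  map_poly f (quart c0 c1 c2 c3 c4) = quart (f c0) (f c1) (f c2) (f c3) (f c4).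
Proof.
apply/polyP => i; rewrite coef_map !coef_quart.
by case: i => [|[|[|[|[|i]]]]] //=; rewrite !nth_nil rmorph0.
Qed.

Lemma horner_quart (R : comNzRingType) (c0 c1 c2 c3 c4 x : R) :
  (quart c0 c1 c2 c3 c4).[x] = c0 + c1 * x + c2 * x ^+ 2 + c3 * x ^+ 3 + c4 * x ^+ 4.
Proof. by rewrite /quart !hornerE. Qed.

(* The monic quartic (in y) whose coefficients are the polynomials in u, p
   below; with u = x1 + x2, p = x1 x2 and y = x3 it is h4(x1,x2,x3,x4)
   restricted to the hyperplane h1 = 0. *)
Definition quartic (R : comNzRingType) (u p : R) : {poly R} :=
  quart ((u ^+ 2 - p) ^+ 2) (u * (u ^+ 2 *+ 2 - p)) (u ^+ 2 *+ 3 - p) (u *+ 2) 1.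

Lemma map_quartic (R S : comNzRingType) (f : {rmorphism R -> S}) (u p : R) :
  map_poly f (quartic u p) = quartic (f u) (f p).
Proof. by rewrite map_quart !(rmorphXn, rmorphB, rmorphM, rmorphMn, rmorph1). Qed.

Lemma quartic_monic (R : comNzRingType) (u p : R) : quartic u p \is monic.
Proof. by rewrite monicE lead_quart ?oner_neq0. Qed.

Lemma size_quartic (R : comNzRingType) (u p : R) : size (quartic u p) = 5%N.
Proof. by rewrite size_quart ?oner_neq0. Qed.

Lemma X_dvd_eval_const (R : comNzRingType) (v : {poly {poly R}}) (rho : R) :
  (map_poly (horner_eval 0) v).[rho] = 0 -> exists v1, v.[rho%:P] = v1 * 'X.
Proof.
move=> v0; suff /factor_theorem [v1 ->] : root v.[rho%:P] 0 by exists v1; rewrite subr0.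
apply/rootP; rewrite -[RHS]v0; have := horner_map (horner_eval (0 : R)) v rho%:P.
by rewrite /= /horner_eval hornerC => <-.
Qed.

Section Specialisation.
Variable C : numFieldType.
Variable c : C.
Hypothesis c0 : c != 0.

(* x1 + x2 and x1 x2 after specialising x1 := c (x2 is the variable of
   {poly C}); h_c := quartic uc pc is then a monic quartic in y = x3. *)
Definition uc : {poly C} := c%:P + 'X.
Definition pc : {poly C} := c%:P * 'X.
Local Notation hc := (quartic uc pc).

Lemma hc_mod_x2 :
  map_poly (horner_eval 0) hc = ('X^2 + c%:P * 'X + (c ^+ 2)%:P) ^+ 2.
Proof.
have u0 : uc.[0] = c by rewrite /uc !hornerE ?addr0.
have p0 : pc.[0] = 0 by rewrite /pc !hornerE ?mulr0.
rewrite map_quartic /= /horner_eval u0 p0 /quartic /quart.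
by rewrite !(polyCD, polyCM, polyC_exp, polyCMn, polyCN, polyC1, polyC0); ring.
Qed.

Lemma hc_at_const (r : C) : hc.[r%:P] = quart ((r ^+ 2 + c * r + c ^+ 2) ^+ 2)
    (r ^+ 3 *+ 2 + c * r ^+ 2 *+ 5 + c ^+ 2 * r *+ 5 + c ^+ 3 *+ 2)
    (r ^+ 2 *+ 3 + c * r *+ 5 + c ^+ 2 *+ 3) (r *+ 2 + c *+ 2) 1.
Proof.
rewrite horner_quart /uc /pc /quart.
by rewrite !(polyCD, polyCM, polyC_exp, polyCMn, polyCN, polyC1); ring.
Qed.

(* Such a factor y - r(x2) gives
   a root rho = r(0) of q, and then both factors of h_c(rho) vanish at
   x2 = 0, so the x2-coefficient of h_c(rho) vanishes; together with
   q(rho) = 0 this forces c^3 = 0. *)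
Lemma hc_no_linear_factor (u w : {poly {poly C}}) :
  u \is monic -> size u = 2%N -> u * w = hc -> False.
Proof.
move=> mu su E.
pose pi0 := map_poly (horner_eval (0 : C)).
pose q : {poly C} := 'X^2 + c%:P * 'X + (c ^+ 2)%:P.
pose rho := - (u`_0).[0].
have Eu : u = 'X + (u`_0)%:P.
  apply/polyP => i; rewrite coefD coefX coefC.
  case: i => [|[|i]] /=; rewrite ?add0r ?addr0 //; last by rewrite nth_default ?su.
  by move: mu; rewrite monicE lead_coefE su => /eqP.
have piu : pi0 u = 'X - rho%:P.
  by rewrite Eu /pi0 map_polyXaddC /horner_eval /rho polyCN opprK.
have pihc : pi0 u * pi0 w = q ^+ 2 by rewrite -rmorphM E -hc_mod_x2.
have /factor_theorem [q1 Eq] : root q rho.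
  apply/rootP; have /eqP := congr1 (horner^~ rho) pihc.
  by rewrite /= piu hornerM hornerXsubC subrr mul0r horner_exp eq_sym expf_eq0 => /andP[_ /eqP].
have Xr0 : ('X - rho%:P : {poly C}) != 0 by rewrite polyXsubC_eq0.
have w_rho : (pi0 w).[rho] = 0.
  suff -> : pi0 w = q1 ^+ 2 * ('X - rho%:P) by rewrite hornerM hornerXsubC subrr mulr0.
  by apply: (mulfI Xr0); rewrite -{1}piu pihc Eq; ring.
have [u1 Eu1] : exists u1, u.[rho%:P] = u1 * 'X.
  by apply: X_dvd_eval_const; rewrite -/pi0 piu hornerXsubC subrr.
have [w1 Ew1] := X_dvd_eval_const w_rho.
have lin_coef : (hc.[rho%:P])`_1 = 0.
  rewrite -E hornerM Eu1 Ew1.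
  have -> : u1 * 'X * (w1 * 'X) = 'X^2 * (u1 * w1) by ring.
  by rewrite coefXnM.
have q_rho : rho ^+ 2 + c * rho + c ^+ 2 = 0 by move: Eq => /(congr1 (horner^~ rho));
  rewrite /q !hornerE subrr mulr0 => ->.
move: lin_coef; rewrite hc_at_const coef_quart /= => lin_coef.
have : c ^+ 3 = (rho *+ 2 + c *+ 3) * (rho ^+ 2 + c * rho + c ^+ 2)
    - (rho ^+ 3 *+ 2 + c * rho ^+ 2 *+ 5 + c ^+ 2 * rho *+ 5 + c ^+ 3 *+ 2) by ring.
by rewrite q_rho lin_coef mulr0 subrr => /eqP; rewrite expf_eq0 (negbTE c0) andbF.
Qed.

(* The two discriminant-like polynomials met in the quadratic case are not
   squares in C[x2]: the first has a simple root at x2 = 0, the second would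
   force an impossible system on the coefficients of its square root. *)
Lemma not_square_1 (s : {poly C}) : s ^+ 2 = pc * (uc ^+ 2 *+ 4 - pc *+ 3) -> False.
Proof.
have -> : pc * (uc ^+ 2 *+ 4 - pc *+ 3) = quart 0 (c ^+ 3 *+ 4) (c ^+ 2 *+ 5) (c *+ 4) 0.
  rewrite /uc /pc /quart.
  by rewrite !(polyCD, polyCM, polyC_exp, polyCMn, polyCN, polyC1, polyC0); ring.
move=> E.
have /factor_theorem [s1 Es] : root s 0.
  apply/rootP/eqP; have := congr1 (horner^~ 0) E.
  rewrite /= horner_exp horner_quart !expr0n /= ?mulr0 ?mul0r ?addr0 => /eqP.
  by rewrite expf_eq0 => /andP [_].
have := congr1 (fun p : {poly C} => p`_1) E; rewrite /= coef_quart /= Es subr0.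
have -> : (s1 * 'X) ^+ 2 = 'X^2 * s1 ^+ 2 by ring.
rewrite coefXnM /= => /esym /eqP.
by rewrite -mulr_natr mulf_eq0 pnatr_eq0 orbF expf_eq0 /= (negbTE c0).
Qed.

Lemma not_square_2 (S : {poly C}) :
  S ^+ 2 = (uc ^+ 2 *+ 3 - pc *+ 2) ^+ 2 - pc * (uc ^+ 2 *+ 4 - pc *+ 3) *+ 4 -> False.
Proof.
have -> : (uc ^+ 2 *+ 3 - pc *+ 2) ^+ 2 - pc * (uc ^+ 2 *+ 4 - pc *+ 3) *+ 4
    = quart (c ^+ 4 *+ 9) (c ^+ 3 *+ 8) (c ^+ 2 *+ 14) (c *+ 8) 9.
  rewrite /uc /pc /quart.
  rewrite !(polyCD, polyCM, polyC_exp, polyCMn, polyCN, polyC1, polyC0) ?polyC_natr.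
  ring.
move=> E.
have sK : size (S ^+ 2) = 5%N by rewrite E size_quart ?pnatr_eq0.
have S0 : S != 0 by apply: contra_eq_neq sK => ->; rewrite expr0n size_poly0.
have sS : size S = 3%N.
  have := size_exp S 2; rewrite sK /=.
  have : size S != 0%N by rewrite size_poly_eq0.
  by case: (size S) => // n _ h; lia.
have ES : S = quart S`_0 S`_1 S`_2 0 0.
  by rewrite {1}(@quartE _ S) ?sS //; congr quart; apply: nth_default; rewrite sS.
set s0 := S`_0 in ES; set s1 := S`_1 in ES; set s2 := S`_2 in ES.
have : quart (s0 ^+ 2) (s0 * s1 *+ 2) (s1 ^+ 2 + s0 * s2 *+ 2) (s1 * s2 *+ 2) (s2 ^+ 2) =
       quart (c ^+ 4 *+ 9) (c ^+ 3 *+ 8) (c ^+ 2 *+ 14) (c *+ 8) 9.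
  rewrite -E ES /quart.
  by rewrite !(polyCD, polyCM, polyC_exp, polyCMn, polyCN, polyC1, polyC0); ring.
case/quart_inj => E0 E1 E2 E3 E4.
have c8 : c *+ 8 != 0 by rewrite -mulr_natr mulf_eq0 pnatr_eq0 /= (negbTE c0).
have /eqP : (c *+ 8) * (c ^+ 2 * s2 - s0) = 0.
  have -> : (c *+ 8) * (c ^+ 2 * s2 - s0) = (c ^+ 3 *+ 8) * s2 - (c *+ 8) * s0 by ring.
  by rewrite -E1 -E3; ring.
rewrite mulf_eq0 (negbTE c8) /= subr_eq0 => /eqP Es0.
have : (s1 * s2 *+ 2) ^+ 2 + c ^+ 2 *+ 8 * (s2 ^+ 2) ^+ 2
       - s2 ^+ 2 *+ 4 * (s1 ^+ 2 + s0 * s2 *+ 2) = 0 by rewrite -Es0; ring.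
rewrite E3 E4 E2.
have -> : (c *+ 8) ^+ 2 + c ^+ 2 *+ 8 * 9 ^+ 2 - 9 *+ 4 * (c ^+ 2 *+ 14)
   = c ^+ 2 * 208 by ring.
by move/eqP; rewrite mulf_eq0 pnatr_eq0 orbF expf_eq0 (negbTE c0).
Qed.

(* Comparing
   coefficients, either al = ga and then (be - de)^2 = pc (4 uc^2 - 3 pc),
   or (2 (al - ga)^2 + 12 uc^2 - 8 pc) / 4 squares to
   (3 uc^2 - 2 pc)^2 - 4 pc (4 uc^2 - 3 pc); both are excluded above. *)
Lemma hc_not_product_of_quadratics (al be ga de : {poly C}) :
  quart (be * de) (al * de + be * ga) (be + de + al * ga) (al + ga) 1 = hc -> False.
Proof.
case/quart_inj => E0 E1 E2 E3 _.
have Ega : ga = uc *+ 2 - al by rewrite -E3 addrAC subrr add0r.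
have key : (al - ga) * ((de - be) *+ 4 + uc * (al - ga) *+ 2)
    = (al * de + be * ga - uc * (uc ^+ 2 *+ 2 - pc)) *+ 8
      - uc * (be + de + al * ga - (uc ^+ 2 *+ 3 - pc)) *+ 8 by rewrite Ega; ring.
rewrite E1 E2 !subrr mulr0 !mul0rn subrr in key.
have two0 : (2%:R : {poly C}) != 0 by rewrite -polyC_natr polyC_eq0 pnatr_eq0.
move/eqP: key; rewrite mulf_eq0 subr_eq0 => /orP [/eqP al_ga | /eqP hX].
- have al_u : al = uc.
    have : (al - uc) * 2%:R = 0.
      have -> : (al - uc) * 2%:R = al + ga - uc *+ 2 by rewrite -al_ga; ring.
      by rewrite E3 subrr.
    by move/eqP; rewrite mulf_eq0 (negbTE two0) orbF subr_eq0 => /eqP.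
  apply: (@not_square_1 (be - de)).
  have -> : (be - de) ^+ 2 = (be + de + al * ga - al * ga) ^+ 2 - (be * de) *+ 4 by ring.
  by rewrite E2 E0 -al_ga al_u; ring.
- have T1 : be + de = uc ^+ 2 *+ 3 - pc - al * ga by rewrite -E2 addrK.
  have T2 : (de - be) *+ 4 = - (uc * (al - ga) *+ 2).
    by apply/eqP; rewrite -addr_eq0 hX.
  have H64 : ((uc ^+ 2 *+ 3 - pc - al * ga) *+ 4) ^+ 2 - (uc * (al - ga) *+ 2) ^+ 2
      = (uc ^+ 2 - pc) ^+ 2 *+ 64.
    have : ((be + de) *+ 4) ^+ 2 - ((de - be) *+ 4) ^+ 2 = (be * de) *+ 64 by ring.
    by rewrite T1 T2 sqrrN E0.
  set S0 := (al - ga) ^+ 2 *+ 2 + uc ^+ 2 *+ 12 - pc *+ 8.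
  have I2 : S0 ^+ 2 = ((uc ^+ 2 *+ 3 - pc *+ 2) ^+ 2 - pc * (uc ^+ 2 *+ 4 - pc *+ 3) *+ 4) *+ 16
      + (((uc ^+ 2 *+ 3 - pc - al * ga) *+ 4) ^+ 2 - (uc * (al - ga) *+ 2) ^+ 2
         - (uc ^+ 2 - pc) ^+ 2 *+ 64) *+ 4.
    by rewrite /S0 Ega; ring.
  rewrite H64 subrr mul0rn addr0 in I2.
  apply: (@not_square_2 (S0 * ((4 : C)^-1)%:P)).
  rewrite exprMn I2 -polyC_exp -mulr_natr -mulrA -polyC_natr -polyCM.
  have -> : (16%:R * (4 : C)^-1 ^+ 2) = 1 by field.
  by rewrite mulr1.
Qed.

Lemma hc_no_quadratic_factor (u w : {poly {poly C}}) :
  u \is monic -> size u = 3%N -> w \is monic -> size w = 3%N -> u * w = hc -> False.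
Proof.
have monic3 (v : {poly {poly C}}) : v \is monic -> size v = 3%N -> v = quart v`_0 v`_1 1 0 0.
  move=> mv sv; rewrite {1}(@quartE _ v) ?sv //.
  move: mv; rewrite monicE lead_coefE sv => /eqP ->.
  by congr quart; apply: nth_default; rewrite sv.
move=> mu su mw sw E; have Eu := monic3 u mu su; have Ew := monic3 w mw sw.
apply: (@hc_not_product_of_quadratics u`_1 u`_0 w`_1 w`_0).
rewrite -E [in RHS]Eu [in RHS]Ew /quart.
by rewrite !(polyCD, polyCM, polyC_exp, polyCMn, polyCN, polyC1, polyC0); ring.
Qed.

(* Hence every factorisation of h_c has a constant factor: normalising the
   factors to be monic, the degrees split as 1 + 3, 2 + 2 or 3 + 1. *)
Lemma hc_only_constant_factors : only_constant_factors hc.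
Proof.
move=> U W E.
have hc0 : hc != 0 by rewrite -size_poly_eq0 size_quartic.
have U0 : U != 0 by apply: contraNneq hc0 => e; rewrite E e mul0r.
have W0 : W != 0 by apply: contraNneq hc0 => e; rewrite E e mulr0.
have sUW : (size U + size W)%N = 6%N.
  by have := size_quartic uc pc; rewrite E size_mul //; case: (_ + _)%N => // k /= ->.
have lUW : lead_coef U * lead_coef W = 1.
  by rewrite -lead_coefM -E; apply/eqP; rewrite -monicE quartic_monic.
pose u := lead_coef W *: U; pose w := lead_coef U *: W.
have mu : u \is monic by rewrite monicE lead_coefZ mulrC lUW.
have mw : w \is monic by rewrite monicE lead_coefZ lUW.
have su : size u = size U by rewrite size_scale // lead_coef_eq0.
have sw : size w = size W by rewrite size_scale // lead_coef_eq0.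
have Euw : u * w = hc by rewrite -scalerAr -scalerAl scalerA lUW scale1r E.
have nU : size U != 0%N by rewrite size_poly_eq0.
have nW : size W != 0%N by rewrite size_poly_eq0.
have : (size U = 1%N \/ size W = 1%N) \/ (size U = 2%N /\ size W = 4%N) \/
   (size U = 3%N /\ size W = 3%N) \/ (size U = 4%N /\ size W = 2%N) by lia.
case=> [//|[[eU eW]|[[eU eW]|[eU eW]]]]; exfalso.
- by apply: (hc_no_linear_factor mu _ Euw); rewrite su eU.
- by apply: (hc_no_quadratic_factor mu _ mw _ Euw); rewrite ?su ?sw ?eU ?eW.
- by apply: (hc_no_linear_factor mw _ (etrans (mulrC _ _) Euw)); rewrite sw eW.
Qed.
End Specialisation.

Lemma hc_prime (C : numClosedFieldType) (c : C) :
  c != 0 -> prime_element (quartic (uc c) (pc c)).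
Proof.
move=> c0; apply: prime_of_only_constant_factors; first exact: quartic_monic.
exact: hc_only_constant_factors.
Qed.

Section CompleteSymmetric.
Variable R : comNzRingType.

Definition geom (n : nat) (w : R) : {poly R} := \sum_(j < n) (w ^+ j)%:P * 'X^j.

(* Generating function: h_a(v) is the t^a-coefficient of the product of the
   truncated geometric series of the v_i (exponents beyond a do not
   contribute to that coefficient). *)
Lemma complete_sym_coef (a : nat) (v : 'I_4 -> R) :
  \sum_(e : {ffun 'I_4 -> 'I_a.+1} | (\sum_(i < 4) (e i : nat))%N == a)
     \prod_(i < 4) v i ^+ e i
  = (\prod_(i < 4) geom a.+1 (v i))`_a.
Proof.
rewrite /geom bigA_distr_bigA coef_sum big_mkcond /=; apply: eq_bigr => f _.
rewrite big_split /= -rmorph_prod prodrXr coefCM coefXn.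
by rewrite eq_sym; case: eqP => _; rewrite ?mulr1 ?mulr0.
Qed.

Lemma geom_mul_linear (n : nat) (w : R) :
  (1 - w%:P * 'X) * geom n w = 1 - (w ^+ n)%:P * 'X^n.
Proof.
elim: n => [|n IH]; first by rewrite /geom big_ord0 mulr0 !expr0 polyC1 mulr1 subrr.
by rewrite /geom big_ord_recr /= mulrDr IH !polyC_exp !exprS; ring.
Qed.

Lemma h1_coef (w0 w1 w2 w3 : R) :
  (geom 2 w0 * geom 2 w1 * geom 2 w2 * geom 2 w3)`_1 = w0 + w1 + w2 + w3.
Proof.
have E w : geom 2 w = 1 + w%:P * 'X.
  by rewrite /geom !big_ord_recr big_ord0 /= expr0 expr1 polyC1 add0r mul1r.
rewrite !E.
have -> : (1 + w0%:P * 'X) * (1 + w1%:P * 'X) * (1 + w2%:P * 'X) * (1 + w3%:P * 'X)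
  = 1 + (w0 + w1 + w2 + w3)%:P * 'X + 'X^2 *
    ((w0*w1 + w0*w2 + w0*w3 + w1*w2 + w1*w3 + w2*w3)%:P + 'X *
     ((w0*w1*w2 + w0*w1*w3 + w0*w2*w3 + w1*w2*w3)%:P + 'X * (w0*w1*w2*w3)%:P)).
  by rewrite !(polyCD, polyCM); ring.
by rewrite !coefD coefCM coefXnM coef1 coefX /= mulr1 add0r addr0.
Qed.

(* The product E of the 1 - w_i t
   is 1 + e2 t^2 - e3 t^3 + e4 t^4, and E times the generating function G is
   1 modulo t^5; comparing the coefficients of t^0, ..., t^4 determines
   those of G recursively. *)
Lemma h4_coef (w0 w1 w2 w3 : R) : w0 + w1 + w2 + w3 = 0 ->
  (geom 5 w0 * geom 5 w1 * geom 5 w2 * geom 5 w3)`_4 =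
  (w0*w1 + w0*w2 + w0*w3 + w1*w2 + w1*w3 + w2*w3) ^+ 2 - w0*w1*w2*w3.
Proof.
move=> e1_0.
set G := _ * _ * _ * _.
set e2 := w0*w1 + w0*w2 + w0*w3 + w1*w2 + w1*w3 + w2*w3.
set e3 := w0*w1*w2 + w0*w1*w3 + w0*w2*w3 + w1*w2*w3.
set e4 := w0*w1*w2*w3.
set E := (1 - w0%:P * 'X) * (1 - w1%:P * 'X) * (1 - w2%:P * 'X) * (1 - w3%:P * 'X).
have [T EG] : exists T, E * G = 1 + 'X^5 * T.
  have mulX5 (a b : {poly R}) :
    (1 + 'X^5 * a) * (1 + 'X^5 * b) = 1 + 'X^5 * (a + b + 'X^5 * (a * b)) by ring.
  have geomX5 w : (1 - w%:P * 'X) * geom 5 w = 1 + 'X^5 * - (w ^+ 5)%:P.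
    by rewrite geom_mul_linear; ring.
  have -> : E * G = ((1 - w0%:P * 'X) * geom 5 w0) * ((1 - w1%:P * 'X) * geom 5 w1)
      * ((1 - w2%:P * 'X) * geom 5 w2) * ((1 - w3%:P * 'X) * geom 5 w3).
    by rewrite /E /G; ring.
  by rewrite !geomX5 !mulX5; eexists.
have EE : E = 1 + e2%:P * 'X^2 - e3%:P * 'X^3 + e4%:P * 'X^4.
  rewrite /E /e2 /e3 /e4.
  have -> : w3 = - (w0 + w1 + w2) by apply/eqP; rewrite -addr_eq0 addrC e1_0.
  by rewrite !(polyCD, polyCM, polyCN); ring.
have EG2 : E * G = G + e2%:P * ('X^2 * G) - e3%:P * ('X^3 * G) + e4%:P * ('X^4 * G).
  by rewrite EE; ring.
have coefEG k := congr1 (fun p : {poly R} => p`_k) (etrans (esym EG2) EG).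
move: (coefEG 0%N) (coefEG 1%N) (coefEG 2%N) (coefEG 4%N).
rewrite /= !(coefD, coefB, coefN, coefCM, coefXnM, coef1) /= !subnn !mulr0 !addr0 ?oppr0 ?addr0.
move=> G0 G1 G2 G4.
rewrite G0 mulr1 in G2; rewrite (_ : 4 - 2 = 2)%N // (_ : 4 - 3 = 1)%N // in G4.
have {}G2 : G`_2 = - e2 by apply/eqP; rewrite -addr_eq0 G2.
have -> : G`_4 = (G`_4 + e2 * G`_2 - e3 * G`_1 + e4 * G`_0)
                 - e2 * G`_2 + e3 * G`_1 - e4 * G`_0 by ring.
by rewrite G4 G2 G1 G0; ring.
Qed.
End CompleteSymmetric.

Lemma in_ideal2_XsubC (R : comNzRingType) (s : R) (h p : {poly R}) :
  in_ideal2 ('X - s%:P) h p <-> divides h.[s] p.[s].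
Proof.
split=> [[a [b ->]] | [m Em]].
  by exists b.[s]; rewrite hornerD !hornerM hornerXsubC subrr mulr0 add0r.
have /factor_theorem [q1 E1] : root (p - (p.[s])%:P) s.
  by apply/rootP; rewrite hornerD hornerN hornerC subrr.
have /factor_theorem [q2 E2] : root (h - (h.[s])%:P) s.
  by apply/rootP; rewrite hornerD hornerN hornerC subrr.
exists (q1 - m%:P * q2), m%:P.
have -> : p = (p - (p.[s])%:P) + (p.[s])%:P by rewrite subrK.
have -> : h = (h - (h.[s])%:P) + (h.[s])%:P by rewrite subrK.
by rewrite E1 E2 Em polyCM; ring.
Qed.

Lemma lead_coef_vanishes (A : nzRingType) (B : idomainType)
    (f : {rmorphism A -> B}) (h : {poly B}) (r : {poly A}) :
  h != 0 -> (size r < size h)%N -> divides h (map_poly f r) -> f (lead_coef r) = 0.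
Proof.
move=> h0 sr [m Em].
have size_map : (size (map_poly f r) <= size r)%N.
  by apply/leq_sizeP => j hj; rewrite coef_map nth_default // raddf0.
suff fr0 : map_poly f r = 0.
  by have := congr1 (fun q : {poly B} => q`_(size r).-1) fr0; rewrite /= coef0 coef_map.
apply/eqP/negPn/negP => fr0.
have hdv : h %| map_poly f r by rewrite Em dvdp_mull.
have := leq_trans (dvdp_leq fr0 hdv) size_map.
by rewrite leqNgt sr.
Qed.

(* If g divided p q but neither p nor q, their nonzero remainders
   r_p, r_q modulo g would be smaller than g; specialising with f for a the
   product of their leading coefficients, the image of g would divide the
   image of r_p or of r_q, whose leading coefficient f then kills. *)
Lemma prime_of_specialisations (A B : idomainType) (g : {poly A}) :
  g \is monic ->
  (forall a : A, a != 0 ->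
     exists f : {rmorphism A -> B}, f a != 0 /\ prime_element (map_poly f g)) ->
  prime_element g.
Proof.
move=> mg spec p q [m Epq].
have Ep := Pdiv.RingMonic.rdivp_eq mg p; have Eq := Pdiv.RingMonic.rdivp_eq mg q.
set dp := Pdiv.CommonRing.rdivp p g in Ep; set rp := Pdiv.CommonRing.rmodp p g in Ep.
set dq := Pdiv.CommonRing.rdivp q g in Eq; set rq := Pdiv.CommonRing.rmodp q g in Eq.
have [rp0|rp0] := eqVneq rp 0; first by left; exists dp; rewrite {1}Ep rp0 addr0.
have [rq0|rq0] := eqVneq rq 0; first by right; exists dq; rewrite {1}Eq rq0 addr0.
exfalso.
have g0 := monic_neq0 mg.
have srp : (size rp < size g)%N by apply: Pdiv.CommonRing.ltn_rmodpN0.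
have srq : (size rq < size g)%N by apply: Pdiv.CommonRing.ltn_rmodpN0.
have Er : rp * rq = (m - dp * q - dq * p + dp * dq * g) * g.
  have -> : rp * rq = p * q - (dp * q + dq * p - dp * dq * g) * g.
    have -> : rp = p - dp * g by rewrite {1}Ep addrC addKr.
    have -> : rq = q - dq * g by rewrite {1}Eq addrC addKr.
    ring.
  by rewrite Epq; ring.
have a0 : lead_coef rp * lead_coef rq != 0 by rewrite mulf_neq0 ?lead_coef_eq0.
have [f [fa0 fg_prime]] := spec _ a0.
have sfg : size (map_poly f g) = size g.
  by rewrite size_map_poly_id0 // (monicP mg) rmorph1 oner_neq0.
have fg0 : map_poly f g != 0 by rewrite -size_poly_eq0 sfg size_poly_eq0.
have [||] := fg_prime (map_poly f rp) (map_poly f rq).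
- by exists (map_poly f (m - dp * q - dq * p + dp * dq * g)); rewrite -rmorphM /= Er rmorphM.
- move/(lead_coef_vanishes fg0); rewrite sfg => /(_ srp) frp.
  by move: fa0; rewrite rmorphM frp mul0r eqxx.
- move/(lead_coef_vanishes fg0); rewrite sfg => /(_ srq) frq.
  by move: fa0; rewrite rmorphM frq mulr0 eqxx.
Qed.

Lemma not_divides_1 (R : idomainType) (g : {poly R}) : (1 < size g)%N -> ~ divides g 1.
Proof.
move=> sg [m Em]; have g0 : g != 0 by rewrite -size_poly_gt0 ltnW.
have m0 : m != 0 by apply: contra_eq_neq Em => ->; rewrite mul0r oner_neq0.
have := congr1 (fun x : {poly R} => size x) Em; rewrite /= size_poly1 size_mul //.
by move: (size_poly_gt0 m) sg; rewrite m0; case: (size m) => // k _; rewrite addSn /=; lia.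
Qed.

Section Hyperplane.
Variable R : comNzRingType.
Local Notation B := {poly {poly {poly R}}}.

Definition x1 : B := ('X : {poly R})%:P%:P.
Definition x2 : B := ('X : {poly {poly R}})%:P.
Definition x3 : B := 'X.

Definition x4_on_h1 : B := - (x1 + x2 + x3).

Definition h4_on_h1 : B :=
  (x1 * x2 + x1 * x3 + x1 * x4_on_h1 + x2 * x3 + x2 * x4_on_h1 + x3 * x4_on_h1) ^+ 2
  - x1 * x2 * x3 * x4_on_h1.

Lemma h1E : h4sym R 1 = 'X - x4_on_h1%:P.
Proof.
rewrite /h4sym complete_sym_coef !big_ord_recl big_ord0 mulr1 /= !mulrA.
rewrite (h1_coef (var4 R ord0)) /var4 /= /x4_on_h1 /x1 /x2 /x3 !polyCN !polyCD opprK.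
ring.
Qed.

(* h4 evaluated at x4 = x4_on_h1, via h4_coef since e1 vanishes there. *)
Lemma h4E : (h4sym R 4).[x4_on_h1] = h4_on_h1.
Proof.
rewrite /h4sym horner_sum.
have horner_monomial (e : {ffun 'I_4 -> 'I_5}) :
    (\prod_(i < 4) var4 R i ^+ e i).[x4_on_h1] = \prod_(i < 4) (var4 R i).[x4_on_h1] ^+ e i.
  by rewrite horner_prod; apply: eq_bigr => i _; rewrite horner_exp.
under eq_bigr => e _ do rewrite horner_monomial.
rewrite (complete_sym_coef 4 (fun i => (var4 R i).[x4_on_h1])).
rewrite !big_ord_recl big_ord0 mulr1 !mulrA /= h4_coef.
  by rewrite /var4 /= !hornerC hornerX.
by rewrite /var4 /= !hornerC hornerX /x4_on_h1 subrr.
Qed.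

Lemma h4_on_h1_quartic :
  h4_on_h1 = quartic (('X : {poly R})%:P + 'X) (('X : {poly R})%:P * 'X).
Proof.
rewrite /h4_on_h1 /x4_on_h1 /x1 /x2 /x3 /quartic /quart.
by rewrite !(polyCD, polyCM, polyC_exp, polyCMn, polyCN, polyC1, polyCB); ring.
Qed.
End Hyperplane.

(* A nonzero polynomial over a numeric domain (characteristic 0) has a
   non-root among 0, 1, ..., deg. *)
Lemma exists_nonroot (R : numDomainType) (N : {poly R}) : N != 0 -> exists c, ~~ root N c.
Proof.
move=> N0; set rs := [seq (i%:R : R) | i <- iota 0 (size N)].
have [/hasP [x _ hx] | /hasPn nh] := boolP (has (fun x => ~~ root N x) rs); first by exists x.
exfalso; move: N0; apply/negP/negPn/eqP; apply: (@roots_geq_poly_eq0 _ N rs).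
- by apply/allP => x xs; apply/negPn/nh.
- by rewrite map_inj_uniq ?iota_uniq // => i j /eqP; rewrite eqr_nat => /eqP.
- by rewrite size_map size_iota.
Qed.

(* Every nonzero a in C[x1][x2] stays nonzero under some specialisation
   x1 := c with c != 0: take c a non-root of x1 * (leading coefficient). *)
Lemma nonzero_specialisation (C : numDomainType) (a : {poly {poly C}}) :
  a != 0 -> exists2 c : C, c != 0 & map_poly (horner_eval c) a != 0.
Proof.
move=> a0; have [|c] := @exists_nonroot _ (lead_coef a * 'X).
  by rewrite mulf_neq0 ?lead_coef_eq0 ?polyX_eq0.
rewrite /root hornerM hornerX mulf_eq0 negb_or => /andP [ac c0].
exists c => //; apply: contra ac => /eqP fa0.
have := congr1 (fun q : {poly C} => q`_(size a).-1) fa0.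
by rewrite /= coef_map coef0 /= -lead_coefE => /rootP.
Qed.

(* Over an algebraically closed field of characteristic 0, h4 restricted to
   the hyperplane h1 = 0 is a prime element of C[x1][x2][x3]: its
   specialisations x1 := c are the prime quartics h_c. *)
Lemma h4_on_h1_prime (C : numClosedFieldType) : prime_element (h4_on_h1 C).
Proof.
rewrite h4_on_h1_quartic; apply: prime_of_specialisations (quartic_monic _ _) _.
move=> a /nonzero_specialisation [c c0 fa0]; exists (map_poly (horner_eval c)); split=> //.
rewrite map_quartic rmorphD rmorphM /= !map_polyC map_polyX /= horner_evalE hornerX.
exact: hc_prime.
Qed.

Theorem mainTheorem10 (C : numClosedFieldType) :
  prime_ideal (in_ideal2 (h4sym C 1) (h4sym C 4)).
Proof.
have memE p : in_ideal2 (h4sym C 1) (h4sym C 4) p <-> divides (h4_on_h1 C) p.[x4_on_h1 C].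
  by rewrite h1E -h4E; exact: in_ideal2_XsubC.
split=> [/memE | p q /memE].
  by rewrite hornerC; apply: not_divides_1; rewrite h4_on_h1_quartic size_quartic.
by rewrite hornerM => /h4_on_h1_prime [] /memE; [left | right].
Qed.
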